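(* Consider the finite configuration of height $3$ and type $(1,2,2,1)$ given by $$p_{0,1}=0,\ p_{1,1}=-\tfrac{\sqrt2}{2}+\mathrm{i},\ p_{1,2}=\tfrac{\sqrt2}{2}+\mathrm{i},\ p_{2,1}=-\tfrac{\sqrt2}{2}+2\mathrm{i},\ p_{2,2}=\tfrac{\sqrt2}{2}+2\mathrm{i},\ p_{3,1}=3\mathrm{i}.$$ This configuration is balanced, non-degenerate and has residual force $\frac{2}{3\mathrm{i}}$.
   Context: For a finite configuration $(p_{k,i})_{0\le k\le h,1\le i\le n_k}$ of type $(n_0,\ldots,n_h)$ with $n_0=n_h=1$: set $c_k=1/n_k$, $n_{-1}=n_{h+1}=0$, $u_{k,i}=p_{k,i}-p_{k,1}$, $\ell_k=p_{k,1}-p_{k-1,1}$; forces $F_{k,i}=2\sum_{j\neq i}\frac{c_k^2}{p_{k,i}-p_{k,j}}-\sum_{j=1}^{n_{k+1}}\frac{c_kc_{k+1}}{p_{k,i}-p_{k+1,j}}-\sum_{j=1}^{n_{k-1}}\frac{c_kc_{k-1}}{p_{k,i}-p_{k-1,j}}$ and $G_k=\sum_{i=1}^{n_k}\sum_{j=1}^{n_{k-1}}\frac{c_kc_{k-1}}{p_{k,i}-p_{k-1,j}}$ ($1\le k\le h$). Balanced means $F_{k,i}=0$ for $1\le k\le h-1$; the residual force is $F_{0,1}$; non-degenerate means the differential of the map $(\ell_1,u_{1,2},\ldots,u_{1,n_1},\ell_2,u_{2,2},\ldots,u_{2,n_2},\ell_3,\ldots,\ell_h)\mapsto(G_1,F_{1,2},\ldots,F_{1,n_1},G_2,F_{2,2},\ldots,F_{2,n_2},G_3,\ldots,G_h)$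 is an isomorphism. *)

From HB Require Import structures.
From mathcomp Require Import all_boot all_order all_algebra.
From mathcomp Require Import all_classical all_reals all_analysis.
From mathcomp Require Import complex.
Unset Printing Implicit Defensive.
Import Order.TTheory GRing.Theory Num.Theory.
Import numFieldNormedType.Exports.
Local Open Scope ring_scope.
Local Open Scope complex_scope.

(* A finite configuration of height h and type (n 0, ..., n h) is encoded by
   h : nat, n : nat -> nat and p : nat -> nat -> K, where p k i is p_{k,i}
   (0 <= k <= h, 1 <= i <= n k); values outside this range are irrelevant. *)
Section Forces.
Context {K : numFieldType}.

Definition cw (n : nat -> nat) (k : nat) : K := ((n k)%:R)^-1.

(* F_{k,i}; the conventions n_{-1} = n_{h+1} = 0 make the corresponding sums
   empty, which is what the guards (k < h) and (0 < k) implement. *)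
Definition Fforce (h : nat) (n : nat -> nat) (p : nat -> nat -> K)
    (k i : nat) : K :=
  2 * (\sum_(1 <= j < (n k).+1 | j != i) (cw n k) ^+ 2 / (p k i - p k j))
  - (if (k < h)%N then
       \sum_(1 <= j < (n k.+1).+1) cw n k * cw n k.+1 / (p k i - p k.+1 j)
     else 0)
  - (if (0 < k)%N then
       \sum_(1 <= j < (n k.-1).+1) cw n k * cw n k.-1 / (p k i - p k.-1 j)
     else 0).

Definition Gforce (n : nat -> nat) (p : nat -> nat -> K) (k : nat) : K :=
  \sum_(1 <= i < (n k).+1) \sum_(1 <= j < (n k.-1).+1)
     cw n k * cw n k.-1 / (p k i - p k.-1 j).

Definition cfg_balanced (h : nat) (n : nat -> nat) (p : nat -> nat -> K) : Prop :=
  forall k i, (1 <= k <= h.-1)%N -> (1 <= i <= n k)%N -> Fforce h n p k i = 0.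

Definition cfg_residual_force (h : nat) (n : nat -> nat) (p : nat -> nat -> K) : K :=
  Fforce h n p 0 1.

(* Labels of the coordinates, in the order
   (l_1, u_{1,2},...,u_{1,n_1}, l_2, u_{2,2},...,u_{2,n_2}, l_3, ..., l_h):
   (k,1) stands for l_k (resp. G_k), (k,i) with i >= 2 for u_{k,i}
   (resp. F_{k,i}); u's only occur for k <= h-1. *)
Definition var_labels (h : nat) (n : nat -> nat) : seq (nat * nat) :=
  flatten [seq (k, 1%N) :: (if (k < h)%N then [seq (k, i) | i <- iota 2 (n k).-1]
                            else [::])
          | k <- iota 1 h].

Definition nvars (h : nat) (n : nat -> nat) : nat := size (var_labels h n).

(* the m-th coordinate of a row vector (0 if out of range) *)
Definition coord_of {N : nat} (x : 'rV[K]_N) (m : nat) : K :=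
  nth 0 [seq x ord0 j | j <- enum 'I_N] m.

(* The configuration with coordinates x, based at p_{0,1}:
   p_{k,1} = p_{0,1} + l_1 + ... + l_k,  p_{k,i} = p_{k,1} + u_{k,i}. *)
Definition config_of (h : nat) (n : nat -> nat) (p01 : K)
    (x : 'rV[K]_(nvars h n)) : nat -> nat -> K :=
  fun k i =>
    p01 + \sum_(1 <= m < k.+1) coord_of x (index (m, 1%N) (var_labels h n))
        + (if i == 1%N then 0 else coord_of x (index (k, i) (var_labels h n))).

Definition force_map (h : nat) (n : nat -> nat) (p01 : K)
    (x : 'rV[K]_(nvars h n)) : 'rV[K]_(nvars h n) :=
  \row_(j < nvars h n)
     let ki := nth (0%N, 0%N) (var_labels h n) j in
     if ki.2 == 1%N then Gforce n (config_of h n p01 x) ki.1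
     else Fforce h n (config_of h n p01 x) ki.1 ki.2.

Definition cfg_coords (h : nat) (n : nat -> nat) (p : nat -> nat -> K)
    : 'rV[K]_(nvars h n) :=
  \row_(j < nvars h n)
     let ki := nth (0%N, 0%N) (var_labels h n) j in
     if ki.2 == 1%N then p ki.1 1%N - p ki.1.-1 1%N
     else p ki.1 ki.2 - p ki.1 1%N.

Definition cfg_nondegenerate (h : nat) (n : nat -> nat) (p : nat -> nat -> K)
    : Prop :=
  differentiable (force_map h n (p 0%N 1%N)) (cfg_coords h n p) /\
  bijective ('d (force_map h n (p 0%N 1%N)) (cfg_coords h n p)).

End Forces.

Definition ex_type (k : nat) : nat :=
  match k with 1 | 2 => 2 | _ => 1 end.

Definition ex_config (R : realType) (k i : nat) : R[i] :=
  let s : R := Num.sqrt 2 / 2 in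
  match k, i with
  | 0, 1 => 0
  | 1, 1 => (- s)%:C + 'i
  | 1, 2 => s%:C + 'i
  | 2, 1 => (- s)%:C + 2 * 'i
  | 2, 2 => s%:C + 2 * 'i
  | 3, 1 => 3 * 'i
  | _, _ => 0
  end.

(* Balancedness and the residual force are evaluations of the defining sums in
   Q(sqrt 2, i).  In the coordinates (l_1, u_{1,2}, l_2, u_{2,2}, l_3) every component
   of the force map is a linear combination of reciprocals of differences
   p_{k,i} - p_{k',j}; these are affine in the coordinates and nonzero at the
   configuration, so differentiating term by term gives the differential h |-> h J
   for an explicit Jacobian J with entries in Q(i sqrt 2), and J is invertible because
   its inverse is exhibited. *)

From HB Require Import structures.
From mathcomp Require Import all_boot all_order all_algebra.
From mathcomp Require Import all_classical all_reals all_analysis.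
From mathcomp Require Import complex ring lra.
Import Order.TTheory GRing.Theory Num.Theory.
Import numFieldNormedType.Exports.
Local Open Scope ring_scope.
Local Open Scope complex_scope.

Section DifferentiationRules.
Context {K : numFieldType} {V : normedModType K}.
Implicit Types (f g df dg : V -> K) (x : V) (c : K).

Lemma eq_is_diff x f g df : f =1 g -> is_diff x f df = is_diff x g df.
Proof. by move=> /funext ->. Qed.

Lemma is_diff_const x c : is_diff x (fun _ => c) (fun _ => 0).
Proof. exact: is_diff_cst. Qed.

(* Pointwise forms of [is_diffD], [is_diffN] and [is_diffZ], which [differentiate]
   below matches syntactically. *)
Lemma is_diff_add {x f g df dg} : is_diff x f df -> is_diff x g dg ->
  is_diff x (fun y => f y + g y) (fun h => df h + dg h).
Proof. by move=> dfx dgx; exact: is_diffD. Qed.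

Lemma is_diff_opp {x f df} :
  is_diff x f df -> is_diff x (fun y => - f y) (fun h => - df h).
Proof. by move=> dfx; exact: is_diffN. Qed.

Lemma is_diff_cst_mul {x} c {f df} :
  is_diff x f df -> is_diff x (fun y => c * f y) (fun h => c * df h).
Proof. by move=> dfx; exact: is_diffZ. Qed.

Lemma is_diff_cst_div {x} c {f df} : is_diff x f df -> f x != 0 ->
  is_diff x (fun y => c / f y) (fun h => - c / f x ^+ 2 * df h).
Proof.
move=> dfx fx0.
have dinv : is_diff x (fun y => (f y)^-1) (fun h => - (f x)^-2 * df h).
  apply: DiffDef; first exact: differentiableV.
  by rewrite diffV // diff_val.
rewrite (_ : (fun h => - c / f x ^+ 2 * df h) = fun h => c * (- (f x)^-2 * df h)).
  exact: is_diff_cst_mul.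
by apply/funext => h; rewrite !mulNr mulrN mulrA.
Qed.

Lemma is_diff_sum {x} {I : Type} (r : seq I) {F dF : I -> V -> K} :
  (forall i, is_diff x (F i) (dF i)) ->
  is_diff x (fun y => \sum_(i <- r) F i y) (fun h => \sum_(i <- r) dF i h).
Proof.
move=> dF_F; rewrite -!fct_sumE.
apply: (big_ind2 (fun a b => is_diff x a b)) => //; first exact: is_diff_cst.
by move=> f1 f2 df1 df2; exact: is_diffD.
Qed.

End DifferentiationRules.

Section RowVectors.
Context {K : numFieldType} {n : nat}.

Lemma coord_ofE (y : 'rV[K]_n) (j : 'I_n) : coord_of y j = y ord0 j.
Proof. by rewrite /coord_of (nth_map j) ?size_enum_ord // nth_ord_enum. Qed.

Lemma coord_of_default (y : 'rV[K]_n) m : (n <= m)%N -> coord_of y m = 0.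
Proof. by move=> le_nm; rewrite /coord_of nth_default // size_map size_enum_ord. Qed.

Lemma is_diff_entry (x : 'rV[K]_n) j :
  is_diff x (fun y : 'rV[K]_n => y ord0 j) (fun h => h ord0 j).
Proof.
have entry_linear : linear (fun y : 'rV[K]_n => y ord0 j).
  by move=> a u v; rewrite !mxE.
pose entry : {linear 'rV[K]_n -> K} :=
  HB.pack (fun y : 'rV[K]_n => y ord0 j) (GRing.isLinear.Build _ _ _ _ _ entry_linear).
have entry_cont : continuous entry by exact: coord_continuous.
rewrite (_ : (fun y => y ord0 j) = entry :> ('rV[K]_n -> K)) //.
apply: DiffDef; first exact: linear_differentiable.
by rewrite diff_lin.
Qed.

Lemma is_diff_coord_of (x : 'rV[K]_n) m :
  is_diff x (fun y => coord_of y m) (fun h => coord_of h m).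
Proof.
case: (ltnP m n) => [lt_mn | le_nm].
  rewrite (_ : (fun y => coord_of y m) = fun y => y ord0 (Ordinal lt_mn)).
    exact: is_diff_entry.
  by apply/funext => y; exact: (coord_ofE y (Ordinal lt_mn)).
rewrite (_ : (fun y => coord_of y m) = fun _ => 0); first exact: is_diff_cst.
by apply/funext => y; exact: coord_of_default.
Qed.

Lemma is_diff_row {V : normedModType K} (x : V) (f D : V -> 'rV[K]_n) :
  (forall j, is_diff x (fun y => f y ord0 j) (fun h => D h ord0 j)) ->
  is_diff x f D.
Proof.
move=> dfx.
have rowE (g : V -> 'rV[K]_n) : g = \sum_(j < n) (fun y => g y ord0 j *: delta_mx ord0 j).
  by rewrite fct_sumE; apply/funext => y; rewrite [LHS]row_sum_delta.
rewrite (rowE f) (rowE D); apply: (big_ind2 (fun a b => is_diff x a b)).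
- exact: is_diff_cst.
- by move=> f1 f2 D1 D2; exact: is_diffD.
- move=> j _; apply: DiffDef; first exact: differentiableZl.
  by rewrite diffZl // diff_val.
Qed.

Lemma mulmx_coord_of m (y : 'rV[K]_n) (A : 'M[K]_(n, m)) j :
  (y *m A) ord0 j = \sum_(k < n) coord_of y k * A k j.
Proof. by rewrite mxE; apply: eq_bigr => k _; rewrite coord_ofE. Qed.

Lemma bij_mulmxr m (A : 'M[K]_n) :
  A \in unitmx -> bijective (fun y : 'M[K]_(m, n) => y *m A).
Proof. by move=> uA; exists (fun y => y *m invmx A) => y; rewrite ?mulmxK ?mulmxKV. Qed.

End RowVectors.

Definition mx_of_rows {K : nzRingType} m n (rows : seq (seq K)) : 'M[K]_(m, n) :=
  \matrix_(i, j) (nth [::] rows i)`_j.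

Lemma coord_of_cfg_coords {K : numFieldType} h n (p : nat -> nat -> K) m :
  (m < nvars h n)%N ->
  coord_of (cfg_coords h n p) m =
    let ki := nth (0%N, 0%N) (var_labels h n) m in
    if ki.2 == 1%N then p ki.1 1%N - p ki.1.-1 1%N else p ki.1 ki.2 - p ki.1 1%N.
Proof. by move=> lt_m; rewrite (coord_ofE _ (Ordinal lt_m)) mxE. Qed.

Lemma is_diff_config_of {K : numFieldType} h (n : nat -> nat) (p : K)
    (x : 'rV[K]_(nvars h n)) k i :
  is_diff x (fun y => config_of h n p y k i) (fun d => config_of h n 0 d k i).
Proof.
rewrite /config_of.
apply: (is_diff_add (is_diff_add (is_diff_const x p)
  (is_diff_sum _ (fun m => is_diff_coord_of x (index (m, 1%N) (var_labels h n)))))).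
by case: eqP => _; [exact: is_diff_const | exact: is_diff_coord_of].
Qed.

Ltac differentiate :=
  lazymatch goal with
  | |- is_diff _ (fun y => @?c y * (@?f y)^-1) _ =>
      eapply is_diff_cst_div; [differentiate|]
  | |- is_diff _ (fun y => @?f y + @?g y) _ =>
      eapply is_diff_add; [differentiate|differentiate]
  | |- is_diff _ (fun y => - @?f y) _ => eapply is_diff_opp; differentiate
  | |- is_diff _ (fun y => @?c y * @?f y) _ => eapply is_diff_cst_mul; differentiate
  | |- is_diff _ (fun y => config_of _ _ _ y _ _) _ => eapply is_diff_config_of
  | |- _ => eapply is_diff_const
  end.

#[local] Arguments ex_config : simpl never.

Section Example.
Variable R : realType.

Definition sqrt2C : R[i] := locked (Num.sqrt 2)%:C.

Lemma sqrt2CE : sqrt2C = Complex (Num.sqrt 2) 0.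
Proof. by rewrite /sqrt2C -lock. Qed.

Lemma sqrt2C_sqr : sqrt2C ^+ 2 = 2.
Proof. by rewrite /sqrt2C -lock -rmorphXn sqr_sqrtr ?ler0n // rmorph_nat. Qed.

Lemma natCE k : (k%:R : R[i]) = Complex k%:R 0.
Proof. by rewrite -(rmorph_nat (real_complex R)). Qed.

Lemma invCE k : (k%:R : R[i])^-1 = Complex k%:R^-1 0.
Proof. by rewrite -(rmorph_nat (real_complex R)) -fmorphV. Qed.

Lemma ex_configE :
  (ex_config R 0 1 = 0) * (ex_config R 1 1 = - (sqrt2C / 2) + 'i) *
  (ex_config R 1 2 = sqrt2C / 2 + 'i) * (ex_config R 2 1 = - (sqrt2C / 2) + 2 * 'i) *
  (ex_config R 2 2 = sqrt2C / 2 + 2 * 'i) * (ex_config R 3 1 = 3 * 'i).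
Proof.
have halfC (a : R) : (a / 2)%:C = a%:C / 2 :> R[i].
  by rewrite rmorphM /= fmorphV rmorph_nat.
have oppC (a : R) : (- a)%:C = - a%:C :> R[i] by exact: rmorphN.
by rewrite /ex_config /sqrt2C -lock !oppC !halfC; do !split.
Qed.

Lemma ex_config_of_coords k i : (k <= 3)%N -> (0 < i <= ex_type k)%N ->
  config_of 3 ex_type (ex_config R 0 1) (cfg_coords 3 ex_type (ex_config R)) k i =
  ex_config R k i.
Proof.
case: k => [|[|[|[|k]]]] //= _; case: i => [|[|[|i]]] //= _;
  rewrite /config_of /index_iota /= ?big_cons ?big_nil /= ?coord_of_cfg_coords //=; ring.
Qed.

Ltac complex_neq0 :=
  first [ by rewrite ?pnatr_eq0
        | apply/negP => /eqP; rewrite ?invCE ?natCE ?sqrt2CE; simpc => eq0;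
          have := congr1 (@complex.Re _) eq0; have := congr1 (@complex.Im _) eq0;
          rewrite /=; (have : 0 < Num.sqrt (2 : R) by rewrite sqrtr_gt0); lra ].

Ltac field_sqrt2_i :=
  let hr := fresh "hr" in let hi := fresh "hi" in
  pose proof sqrt2C_sqr as hr; assert (hi : 'i ^+ 2 = -1 :> R[i]) by exact: sqr_i;
  field: hr hi; repeat (apply/andP; split); complex_neq0.

Lemma ex_balanced : cfg_balanced 3 ex_type (ex_config R).
Proof.
move=> k i /andP[k1 k2] /andP[i1 i2].
case: k k1 k2 i2 => [|[|[|]]] //= _ _ i2; case: i i1 i2 => [|[|[|]]] //= _ _;
rewrite /Fforce /cw /index_iota /= !big_cons !big_nil /= !ex_configE; field_sqrt2_i.
Qed.

Lemma ex_residual_force :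
  cfg_residual_force 3 ex_type (ex_config R) = 2 / ((3 : R[i]) * 'i).
Proof.
rewrite /cfg_residual_force /Fforce /cw /index_iota /= !big_cons !big_nil /= !ex_configE.
field_sqrt2_i.
Qed.

(* Row m, column j holds the derivative of the j-th component (G_1, F_{1,2}, G_2,
   F_{2,2}, G_3) with respect to the m-th coordinate (l_1, u_{1,2}, l_2, u_{2,2}, l_3). *)
Definition ex_jacobian : 'M[R[i]]_5 :=
  let w := sqrt2C * 'i in
  mx_of_rows 5 5
   [:: [:: 2/9; -1/9 - 2/9 * w; 0; 0; 0];
       [:: 1/9 + 2/9 * w; -7/12 - 1/6 * w; -2/9 + 1/18 * w; 1/4; 0];
       [:: 0; 2/9 - 1/18 * w; 4/9; -2/9 - 1/18 * w; 0];
       [:: 0; 1/4; 2/9 + 1/18 * w; -7/12 + 1/6 * w; -1/9 + 2/9 * w];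
       [:: 0; 0; 0; 1/9 - 2/9 * w; 2/9]].

Definition ex_jacobian_inv : 'M[R[i]]_5 :=
  let w := sqrt2C * 'i in
  mx_of_rows 5 5
   [:: [:: 59/24 + 7/6 * w; -7/12 - 7/6 * w; -7/12 - 5/12 * w; -1/12 - 1/6 * w; -3/8];
       [:: 7/12 + 7/6 * w; -7/6; -1/2 + 1/6 * w; -1/6; -1/12 + 1/6 * w];
       [:: -7/12 - 5/12 * w; 1/2 - 1/6 * w; 8/3; -1/2 - 1/6 * w; -7/12 + 5/12 * w];
       [:: 1/12 + 1/6 * w; -1/6; 1/2 + 1/6 * w; -7/6; -7/12 + 7/6 * w];
       [:: -3/8; 1/12 - 1/6 * w; -7/12 + 5/12 * w; 7/12 - 7/6 * w; 59/24 - 7/6 * w]].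

Lemma ex_jacobian_mulV : ex_jacobian *m ex_jacobian_inv = 1%:M.
Proof.
apply/matrixP => -[[|[|[|[|[|//]]]]] ?] [[|[|[|[|[|//]]]]] ?];
  rewrite !mxE !big_ord_recr big_ord0 /= !mxE /=; field_sqrt2_i.
Qed.

Lemma is_diff_ex_force_map :
  is_diff (cfg_coords 3 ex_type (ex_config R))
    (force_map 3 ex_type (ex_config R 0 1)) (fun h => h *m ex_jacobian).
Proof.
apply: is_diff_row => -[[|[|[|[|[|//]]]]] ?]; (eapply is_diff_eq; [
  under eq_is_diff => y do rewrite /force_map mxE /= /Gforce /Fforce /cw
    /index_iota /= ?big_cons ?big_nil /=;
  differentiate; rewrite !ex_config_of_coords // !ex_configE; complex_neq0
| apply/funext => h; rewrite /= mulmx_coord_of !big_ord_recr big_ord0 /= !mxE /=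
    !ex_config_of_coords // !ex_configE /config_of /index_iota /= ?big_cons ?big_nil /=;
  field_sqrt2_i ]).
Qed.

Lemma ex_nondegenerate : cfg_nondegenerate 3 ex_type (ex_config R).
Proof.
have dF := is_diff_ex_force_map.
have [unitJ _] := mulmx1_unit ex_jacobian_mulV.
split; first exact: ex_diff.
by rewrite diff_val; exact: bij_mulmxr.
Qed.

End Example.

Theorem proposition3p4 (R : realType) :
  cfg_balanced 3 ex_type (ex_config R) /\
  cfg_nondegenerate 3 ex_type (ex_config R) /\
  cfg_residual_force 3 ex_type (ex_config R) = 2 / ((3 : R[i]) * 'i).
Proof.
split; first exact: ex_balanced.
by split; [exact: ex_nondegenerate | exact: ex_residual_force].
Qed.
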